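(* Let $X,Y$ be metric spaces and equip $X\times Y$ with the $\ell^1$-metric. For any two Borel probability measures $\pi,\pi'$ on $X\times Y$, \[ |\operatorname{dis}\pi-\operatorname{dis}\pi'|\le 2\,d_{\mathrm P}(\pi,\pi'). \]
   Context: For nonempty $S\subset X\times Y$, $\operatorname{dis}S:=\sup\{|d_X(x,x')-d_Y(y,y')|:(x,y),(x',y')\in S\}$, $\operatorname{dis}\emptyset:=\infty$; for a Borel probability measure $\pi$ on $X\times Y$, $\operatorname{dis}\pi:=\inf_S\max\{\operatorname{dis}S,1-\pi(S)\}$ over closed $S\subset X\times Y$. $d_{\mathrm P}$ is the Prohorov metric on the $\ell^1$-product: $d_{\mathrm P}(\mu,\nu):=\inf\{\varepsilon>0:\mu(U_\varepsilon(A))\ge\nu(A)-\varepsilon\ \forall\text{ Borel }A\}$, $U_\varepsilon(A)$ the open $\varepsilon$-neighborhood. *)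

From HB Require Import structures.
From mathcomp Require Import all_boot all_order all_algebra.
From mathcomp Require Import all_classical all_reals all_analysis.
Set Implicit Arguments. Unset Strict Implicit. Unset Printing Implicit Defensive.
Import Order.TTheory GRing.Theory Num.Theory.
Local Open Scope classical_set_scope.
Local Open Scope ring_scope.

Section Defs.
Variable R : realType.

Definition is_metric (T : Type) (d : T -> T -> R) : Prop :=
  (forall x y, d x y = 0 <-> x = y) /\
  (forall x y, d x y = d y x) /\
  (forall x y z, d x z <= d x y + d y z).

Variables (X Y : Type) (dX : X -> X -> R) (dY : Y -> Y -> R).

Definition dl1 (p q : X * Y) : R := dX p.1 q.1 + dY p.2 q.2.

Definition Uepsl1 (e : R) (A : set (X * Y)) : set (X * Y) :=
  [set p | exists2 a, A a & dl1 p a < e].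

Definition openl1 (A : set (X * Y)) : Prop :=
  forall p, A p -> exists2 e : R, 0 < e & [set q | dl1 p q < e] `<=` A.

Definition closedl1 (A : set (X * Y)) : Prop := openl1 (~` A).

Definition borell1 (A : set (X * Y)) : Prop :=
  smallest (sigma_algebra setT) openl1 A.

(* Borel probability measure on X * Y (values outside Borel sets irrelevant) *)
Definition is_borel_prob (pi : set (X * Y) -> \bar R) : Prop :=
  pi set0 = 0%E /\
  (forall A, borell1 A -> (0 <= pi A)%E) /\
  (forall F : nat -> set (X * Y), (forall n, borell1 (F n)) ->
     trivIset setT F ->
     (fun n => (\sum_(k < n) pi (F k))%E) @ \oo --> pi (\bigcup_k F k)) /\
  pi setT = 1%E.

Definition dis_set (S : set (X * Y)) : \bar R :=
  if `[< S = set0 >] then +oo%E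
  else ereal_sup [set (`|dX p.1 q.1 - dY p.2 q.2|)%:E
                 | p in S & q in S].

Definition dis_meas (pi : set (X * Y) -> \bar R) : \bar R :=
  ereal_inf [set Order.max (dis_set S) (1 - pi S)%E | S in closedl1].

Definition prohorov (mu nu : set (X * Y) -> \bar R) : \bar R :=
  ereal_inf [set e%:E | e in [set e : R | 0 < e /\
     forall A, borell1 A -> (nu A - e%:E <= mu (Uepsl1 e A))%E]].

End Defs.

From HB Require Import structures.
From mathcomp Require Import all_boot all_order all_algebra.
From mathcomp Require Import all_classical all_reals all_analysis.
From mathcomp Require Import lra.
From Stdlib Require Import Classical.
Set Implicit Arguments. Unset Strict Implicit. Unset Printing Implicit Defensive.
Import Order.TTheory GRing.Theory Num.Theory.
Local Open Scope classical_set_scope.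
Local Open Scope ring_scope.

(* If pi' A - e <= pi (U_e A) for every Borel A, then for any closed S the
   closure T of U_e S is closed, pi T >= pi' S - e, and dis T <= dis S + 2e,
   because for the l^1 metric the quantity |dX(x,x') - dY(y,y')| moves by at
   most d(p,s) + d(q,t) when (p,q) is replaced by (s,t). Hence
   dis pi <= dis pi' + 2e. The Prohorov condition is symmetric (apply it to
   the complement of U_e A), which gives the reverse inequality; both
   distortions lie in [0, 1], so taking the infimum over e yields the claim. *)

Section metric.
Variables (R : realType) (T : Type) (d : T -> T -> R).
Hypothesis hd : is_metric d.

Lemma metric_xx x : d x x = 0. Proof. exact: (proj2 (proj1 hd x x)). Qed.

Lemma metric_sym x y : d x y = d y x. Proof. exact: (proj1 (proj2 hd)). Qed.

Lemma metric_triangle x y z : d x z <= d x y + d y z.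
Proof. exact: (proj2 (proj2 hd)). Qed.

Lemma metric_ge0 x y : 0 <= d x y.
Proof. by have := metric_triangle x y x; rewrite metric_xx (metric_sym y x); lra. Qed.

Lemma metric_dist_le x y x' y' : `|d x y - d x' y'| <= d x x' + d y y'.
Proof.
have := metric_triangle x x' y; have := metric_triangle x' y' y.
have := metric_triangle x' x y'; have := metric_triangle x y y'.
rewrite ler_norml (metric_sym y' y) (metric_sym x' x); lra.
Qed.

End metric.

Section l1_metric.
Variables (R : realType) (X Y : Type) (dX : X -> X -> R) (dY : Y -> Y -> R).
Hypotheses (hX : is_metric dX) (hY : is_metric dY).
Local Notation d := (dl1 dX dY).
Local Notation U := (Uepsl1 dX dY).

Lemma is_metric_dl1 : is_metric d.
Proof.
split; [|split].
- move=> p q; rewrite /dl1; split => [|<-]; last by rewrite (metric_xx hX) (metric_xx hY) addr0.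
  have := metric_ge0 hX p.1 q.1; have := metric_ge0 hY p.2 q.2 => h2 h1 h.
  have /(proj1 (proj1 hX _ _)) e1 : dX p.1 q.1 = 0 by lra.
  have /(proj1 (proj1 hY _ _)) e2 : dY p.2 q.2 = 0 by lra.
  by case: p q e1 e2 {h h1 h2} => [x y] [x' y'] /= -> ->.
- by move=> p q; rewrite /dl1 (metric_sym hX) (metric_sym hY).
- move=> p q r; rewrite /dl1.
  by have := metric_triangle hX p.1 q.1 r.1; have := metric_triangle hY p.2 q.2 r.2; lra.
Qed.

Let hd := is_metric_dl1.

Lemma distortion_le p q s t :
  `|dX p.1 q.1 - dY p.2 q.2| <= `|dX s.1 t.1 - dY s.2 t.2| + d p s + d q t.
Proof.
rewrite /dl1; set a := dX p.1 q.1; set b := dY p.2 q.2.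
set a' := dX s.1 t.1; set b' := dY s.2 t.2.
have ha := metric_dist_le hX p.1 q.1 s.1 t.1; have hb := metric_dist_le hY p.2 q.2 s.2 t.2.
have -> : a - b = (a' - b') + (a - a') - (b - b') by lra.
apply: (le_trans (ler_normB _ _)); apply: (le_trans (lerD (ler_normD _ _) (lexx _))).
lra.
Qed.

Definition closurel1 (A : set (X * Y)) : set (X * Y) :=
  [set p | forall r, 0 < r -> exists2 q, A q & d p q < r].

Lemma subset_closurel1 A : A `<=` closurel1 A.
Proof. by move=> p Ap r r0; exists p; rewrite // (metric_xx hd). Qed.

Lemma closedl1_closure A : closedl1 dX dY (closurel1 A).
Proof.
move=> p /= np.
have [r r0 hr] : exists2 r, 0 < r & forall q, A q -> r <= d p q.
  apply: NNPP => hn; apply: np => r r0; apply: NNPP => hq; apply: hn.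
  by exists r => // q Aq; rewrite leNgt; apply/negP => hlt; apply: hq; exists q.
exists (r / 2); first by lra.
move=> p' /= hp' Cp'; have [q Aq hq] := Cp' (r / 2) ltac:(lra).
by have := hr q Aq; have := metric_triangle hd p p' q; lra.
Qed.

Lemma openl1_Ueps e A : openl1 dX dY (U e A).
Proof.
move=> p [a Aa hpa]; exists (e - d p a); first by rewrite subr_gt0.
move=> q /= hq; exists a => //.
by have := metric_triangle hd q p a; rewrite (metric_sym hd q p); lra.
Qed.

Lemma closurel1_Ueps_sub e r S : e < r -> closurel1 (U e S) `<=` U r S.
Proof.
move=> er p /(_ (r - e)) [|q [a Sa hqa] hpq]; first by rewrite subr_gt0.
by exists a => //; have := metric_triangle hd p q a; lra.
Qed.

Lemma closedl1_set1 p : closedl1 dX dY [set p].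
Proof.
move=> q /= nq; exists (d q p) => [|r /= hr rp]; last by move: hr; rewrite rp ltxx.
by rewrite lt_neqAle metric_ge0 // andbT; apply/eqP => /esym /(proj1 (proj1 hd _ _)).
Qed.

Lemma dis_setE S : S !=set0 -> dis_set dX dY S =
  ereal_sup [set (`|dX p.1 q.1 - dY p.2 q.2|)%:E | p in S & q in S].
Proof. by move=> /set0P/negbTE S0; rewrite /dis_set asboolF // => /eqP; rewrite S0. Qed.

Lemma dis_set_le_Ueps e S T : T !=set0 -> (forall r, e < r -> T `<=` U r S) ->
  (dis_set dX dY T <= dis_set dX dY S + (2 * e)%:E)%E.
Proof.
move=> [t Tt] TS; have [s Ss _] := TS (e + 1) ltac:(lra) t Tt.
rewrite !dis_setE; [|by exists s|by exists t].
set D := (E in (_ <= E + _)%E).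
have : (0%:E <= D)%E.
  apply: (@le_trans _ _ (`|dX s.1 s.1 - dY s.2 s.2|)%:E); first by rewrite lee_fin.
  by apply: ereal_sup_ubound; exists s => //; exists s.
case eD: D => [r| |] // _; last by rewrite addye // leey.
apply: ge_ereal_sup => _ [p Tp [q Tq <-]].
rewrite -EFinD lee_fin; apply/ler_addgt0Pr => r' r0.
have [a Sa hpa] := TS (e + r' / 2) ltac:(lra) p Tp.
have [b Sb hqb] := TS (e + r' / 2) ltac:(lra) q Tq.
have : (`|dX a.1 b.1 - dY a.2 b.2|%:E <= r%:E)%E.
  by rewrite -eD; apply: ereal_sup_ubound; exists a => //; exists b.
by rewrite lee_fin; have := distortion_le p q a b; lra.
Qed.

End l1_metric.

Section generated_sigma_algebra.
Variables (T : Type) (G : set (set T)).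
Local Notation B := <<s G >>.

Lemma g_sigma_algebraC A : B A -> B (~` A).
Proof. by rewrite -setTD; exact: sigma_algebraCD. Qed.

Lemma g_sigma_algebraT : B setT.
Proof. by have := g_sigma_algebraC (@sigma_algebra0 _ setT G); rewrite setC0. Qed.

Lemma g_sigma_algebraU A C : B A -> B C -> B (A `|` C).
Proof.
by move=> hA hC; rewrite -bigcup2E; apply: (@sigma_algebra_bigcup _ setT G) => -[|[|n]] //=;
  exact: sigma_algebra0.
Qed.

Lemma g_sigma_algebraD A C : B A -> B C -> B (A `\` C).
Proof.
move=> hA hC; rewrite setDE -[A `&` _]setCK setCI setCK.
by apply: g_sigma_algebraC; apply: g_sigma_algebraU => //; exact: g_sigma_algebraC.
Qed.

End generated_sigma_algebra.

Section borel_probability.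
Variables (R : realType) (X Y : Type) (dX : X -> X -> R) (dY : Y -> Y -> R).
Variable pi : set (X * Y) -> \bar R.
Hypothesis hpi : is_borel_prob dX dY pi.
Local Notation B := (borell1 dX dY).

Lemma borel_probU A C : B A -> B C -> A `&` C = set0 -> pi (A `|` C) = (pi A + pi C)%E.
Proof.
move=> hA hC AC0; have [pi0 [_ [pi_sigma _]]] := hpi.
have hU n : B (bigcup2 A C n) by case: n => [|[|n]] //=; exact: sigma_algebra0.
have := pi_sigma _ hU; rewrite -trivIset_bigcup2 bigcup2E => /(_ AC0) hc.
have hc2 : (fun n => (\sum_(k < n) pi (bigcup2 A C k))%E) @ \oo --> (pi A + pi C)%E.
  apply: cvg_near_cst; near=> n.
  have n2 : (2 <= n)%N by near: n; exists 2%N.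
  rewrite -(subnKC n2) big_split_ord /= !big_ord_recr big_ord0 /= add0e.
  by rewrite big1 ?adde0.
exact: (cvg_unique _ hc hc2).
Unshelve. all: by end_near.
Qed.

Lemma borel_probM A C : B A -> B C -> A `<=` C -> (pi A <= pi C)%E.
Proof.
move=> hA hC sAC; rewrite -(setDUK sAC) borel_probU //; last by rewrite setDE setICA setICr setI0.
  by apply: leeDl; apply: (proj1 (proj2 hpi)); exact: g_sigma_algebraD.
exact: g_sigma_algebraD.
Qed.

Lemma borel_prob_fin A : B A -> pi A = (fine (pi A))%:E /\ 0 <= fine (pi A) <= 1.
Proof.
move=> hA; have h0 : (0 <= pi A)%E by apply: (proj1 (proj2 hpi)).
have h1 : (pi A <= 1)%E.
  by rewrite -(proj2 (proj2 (proj2 hpi))); apply: borel_probM => //; exact: g_sigma_algebraT.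
by move: h0 h1; case: (pi A) => [r| |] //=; rewrite !lee_fin => -> ->.
Qed.

Lemma borel_probC A : B A -> fine (pi (~` A)) = 1 - fine (pi A).
Proof.
move=> hA; have hA' := g_sigma_algebraC hA.
have := borel_probU hA hA' (setICr A); rewrite setUv (proj2 (proj2 (proj2 hpi))).
rewrite (proj1 (borel_prob_fin hA)) (proj1 (borel_prob_fin hA')) -EFinD => -[->]; lra.
Qed.

End borel_probability.

Section prohorov_distortion.
Variables (R : realType) (X Y : Type) (dX : X -> X -> R) (dY : Y -> Y -> R).
Hypotheses (hX : is_metric dX) (hY : is_metric dY).
Local Notation B := (borell1 dX dY).
Local Notation U := (Uepsl1 dX dY).
Local Notation prob := (is_borel_prob dX dY).

Definition prohorov_close (mu nu : set (X * Y) -> \bar R) (e : R) : Prop :=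
  forall A, B A -> (nu A - e%:E <= mu (U e A))%E.

Lemma borel_Ueps e A : B (U e A).
Proof. by apply: sub_sigma_algebra; exact: openl1_Ueps. Qed.

Lemma borel_closed A : closedl1 dX dY A -> B A.
Proof. by move=> /(@sub_sigma_algebra _ setT (openl1 dX dY)) /g_sigma_algebraC; rewrite setCK. Qed.

Lemma prohorov_close_sym mu nu e : prob mu -> prob nu ->
  prohorov_close mu nu e -> prohorov_close nu mu e.
Proof.
move=> hmu hnu h A hA; set C := ~` U e A.
have hUA := borel_Ueps e A; have hC := g_sigma_algebraC hUA.
have hUC := borel_Ueps e C; have hUC' := g_sigma_algebraC hUC.
have AUC : A `<=` ~` U e C.
  move=> x Ax [c Cc hxc]; apply: Cc; exists x => //.
  by rewrite (metric_sym (is_metric_dl1 hX hY)).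
have := borel_probM hmu hA hUC' AUC; have := h C hC.
have := borel_probC hmu hUC; have := borel_probC hnu hUA.
have [-> _] := borel_prob_fin hmu hA; have [-> _] := borel_prob_fin hmu hUC.
have [-> _] := borel_prob_fin hmu hUC'; have [-> _] := borel_prob_fin hnu hC.
have [-> _] := borel_prob_fin hnu hUA.
by rewrite -!EFinB !lee_fin; lra.
Qed.

Lemma dis_meas_le mu nu e : prob mu -> prob nu -> 0 < e -> prohorov_close mu nu e ->
  (dis_meas dX dY mu <= dis_meas dX dY nu + (2 * e)%:E)%E.
Proof.
move=> hmu hnu e0 h.
rewrite -leeBlDr //; apply: le_ereal_inf_tmp => _ [S cS <-]; rewrite leeBlDr //.
have [S0|/set0P [s Ss]] := eqVneq S set0.
  rewrite S0 /dis_set asboolT // (_ : Order.max _ _ = +oo%E) ?addye ?leey //.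
  by apply/eqP; rewrite eq_le leey le_max lexx.
(* The closure of the e-neighbourhood of S competes in the infimum defining dis mu. *)
pose T := closurel1 dX dY (U e S).
have UT : U e S `<=` T by exact: subset_closurel1.
have hT := borel_closed (closedl1_closure hX hY (A := U e S)).
apply: (@le_trans _ _ (Order.max (dis_set dX dY T) (1 - mu T))%E).
  by apply: ereal_inf_lbound; exists T => //; exact: closedl1_closure.
rewrite ge_max; apply/andP; split.
  apply: le_trans (dis_set_le_Ueps hX hY (e := e) (S := S) _ _) _.
  - by exists s; apply: UT; exists s; rewrite // (metric_xx (is_metric_dl1 hX hY)).
  - by move=> r er; exact: closurel1_Ueps_sub.
  by apply: leeD2r; rewrite le_max lexx.
apply: (@le_trans _ _ ((1 - nu S) + (2 * e)%:E)%E); last by apply: leeD2r; rewrite le_max lexx orbT.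
have hS := borel_closed cS; have hUS := borel_Ueps e S.
have := h S hS; have := borel_probM hmu hUS hT UT.
have [-> _] := borel_prob_fin hmu hT; have [-> _] := borel_prob_fin hmu hUS.
have [-> _] := borel_prob_fin hnu hS.
by rewrite -!EFinB -!EFinD !lee_fin; lra.
Qed.

Lemma dis_meas_ge0 mu : prob mu -> (0 <= dis_meas dX dY mu)%E.
Proof.
move=> hmu; apply: le_ereal_inf_tmp => _ [S cS <-]; rewrite le_max; apply/orP; right.
have [-> /andP[_ h1]] := borel_prob_fin hmu (borel_closed cS).
by rewrite -EFinB lee_fin subr_ge0.
Qed.

Lemma dis_meas_le1 mu : prob mu -> (dis_meas dX dY mu <= 1)%E.
Proof.
move=> hmu; have [p _] : [set: X * Y] !=set0.
  apply/set0P/eqP => T0; have [mu0 [_ [_]]] := hmu.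
  by rewrite T0 mu0 => /eqP; rewrite eq_sym onee_eq0.
have cp := closedl1_set1 hX hY (p := p).
apply: ge_ereal_inf; exists (Order.max (dis_set dX dY [set p]) (1 - mu [set p]))%E.
  by exists [set p].
rewrite ge_max; apply/andP; split.
  rewrite dis_setE; last by exists p.
  apply: ge_ereal_sup => _ [a /= -> [b /= -> <-]].
  by rewrite (metric_xx hX) (metric_xx hY) subr0 normr0 lee_fin.
have [-> /andP[h0 _]] := borel_prob_fin hmu (borel_closed cp).
by rewrite -EFinB lee_fin; lra.
Qed.

Lemma dis_meas_fin mu : prob mu -> dis_meas dX dY mu = (fine (dis_meas dX dY mu))%:E.
Proof. by move=> hmu; move: (dis_meas_ge0 hmu) (dis_meas_le1 hmu); case: dis_meas. Qed.

Lemma dis_meas_dist_le mu nu e : prob mu -> prob nu -> 0 < e ->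
  prohorov_close mu nu e ->
  (`|dis_meas dX dY mu - dis_meas dX dY nu| <= (2 * e)%:E)%E.
Proof.
move=> hmu hnu e0 h; have := dis_meas_le hmu hnu e0 h.
have := dis_meas_le hnu hmu e0 (prohorov_close_sym hmu hnu h).
rewrite (dis_meas_fin hmu) (dis_meas_fin hnu) -EFinB abse_EFin -!EFinD !lee_fin.
by rewrite ler_norml => ? ?; apply/andP; split; lra.
Qed.

End prohorov_distortion.

Theorem lemma4p6 (R : realType) (X Y : Type)
  (dX : X -> X -> R) (dY : Y -> Y -> R)
  (hX : is_metric dX) (hY : is_metric dY)
  (pi pi' : set (X * Y) -> \bar R)
  (hpi : is_borel_prob dX dY pi) (hpi' : is_borel_prob dX dY pi') :
  (`| dis_meas dX dY pi - dis_meas dX dY pi' | <= 2%:E * prohorov dX dY pi pi')%E.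
Proof.
rewrite -ereal_inf_pZl //; apply: le_ereal_inf_tmp => _ [_ [e [e0 he] <-] <-].
by rewrite -EFinM; exact: dis_meas_dist_le.
Qed.
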